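(* Let $k$ be a positive integer, $a\ge 1$ an integer and $G=K_a\,\square\,K_a$. Then $\gamma_{P,k}(G)=a-k$ if $a\ge k+2$, and $\gamma_{P,k}(G)=1$ otherwise.
   Context: $K_a$ is the complete graph on $a$ vertices and $\square$ denotes the Cartesian product of graphs. $N_G[v]$ is the closed neighbourhood of $v$, and $N_G[S]$ the union of closed neighbourhoods of vertices of $S$. For $S\subseteq V(G)$, define $\mathcal{P}^{0}_{G,k}(S)=N_G[S]$ and $\mathcal{P}^{i+1}_{G,k}(S)=\bigcup\{N_G[v] : v\in \mathcal{P}^{i}_{G,k}(S),\ |N_G[v]\setminus \mathcal{P}^{i}_{G,k}(S)|\le k\}$; these increase and stabilize to $\mathcal{P}^{\infty}_{G,k}(S)$. $S$ is a $k$-power dominating set if $\mathcal{P}^{\infty}_{G,k}(S)=V(G)$; $\gamma_{P,k}(G)$ is the minimum size of such a set. *)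

From mathcomp Require Import all_boot.
Set Implicit Arguments. Unset Strict Implicit. Unset Printing Implicit Defensive.

(* A simple graph is a symmetric irreflexive relation [e] on a finite type. *)
Section Graphs.
Variable T : finType.
Variable e : rel T.

Definition cnbhd (v : T) : {set T} := [set u | (u == v) || e v u].
Definition cnbhdS (S : {set T}) : {set T} := \bigcup_(v in S) cnbhd v.

Definition pstep (k : nat) (P : {set T}) : {set T} :=
  \bigcup_(v in P | #|cnbhd v :\: P| <= k) cnbhd v.

Definition pdom (k : nat) (S : {set T}) (i : nat) : {set T} :=
  iter i (pstep k) (cnbhdS S).

(* P^oo: the sequence increases in a finite set, so it is stable after #|T| steps *)
Definition pdom_inf (k : nat) (S : {set T}) : {set T} := pdom k S #|T|.

Definition kpds (k : nat) (S : {set T}) : bool := pdom_inf k S == [set: T].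

(* gamma_{P,k}(G): minimum size of a k-power dominating set
   (the whole vertex set is always one, so #|T| is a valid default) *)
Definition gammaPk (k : nat) : nat :=
  \big[minn/#|T|]_(S : {set T} | kpds k S) #|S|.
End Graphs.

Definition complete_rel (a : nat) : rel 'I_a := fun x y => x != y.

Definition cart_rel (T1 T2 : finType) (e1 : rel T1) (e2 : rel T2) : rel (T1 * T2) :=
  fun x y => ((x.1 == y.1) && e2 x.2 y.2) || ((x.2 == y.2) && e1 x.1 y.1).

Definition KaKa (a : nat) : rel ('I_a * 'I_a) :=
  cart_rel (@complete_rel a) (@complete_rel a).

From mathcomp Require Import all_boot all_order.
From mathcomp Require Import zify.

Set Implicit Arguments.
Unset Strict Implicit.
Unset Printing Implicit Defensive.

(* Call Q closed when each of its vertices has either its whole closed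
   neighbourhood in Q or more than k neighbours outside Q: the forcing rule then
   never leaves Q, so no proper closed set contains N[S] for a k-power dominating
   set S.  In K_a [] K_a, N[S] is the union of the rows R and the columns C met
   by S, and this union is closed as soon as a - |R| > k and a - |C| > k; hence
   |S| >= a - k.  Conversely, a vertex on a row of S sees at most a - |R|
   unobserved vertices, all in its own column, so when |R| >= a - k a single
   forcing step observes everything. *)

Section PowerDomination.
Variables (T : finType) (e : rel T) (k : nat).

Lemma pstep_setT : pstep e k setT = setT.
Proof.
apply/setP => u; rewrite inE; apply/bigcupP; exists u; last by rewrite inE eqxx.
by rewrite inE setDT cards0.
Qed.

Lemma kpds_pdom (S : {set T}) i :
  i <= #|T| -> pdom e k S i = setT -> kpds e k S.
Proof.
move=> le_i_T PiT; rewrite /kpds /pdom_inf /pdom -(subnK le_i_T) iterD.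
rewrite -/(pdom e k S i) PiT.
by apply/eqP; elim: (#|T| - i) => //= n ->; apply: pstep_setT.
Qed.

Definition pstep_closed (Q : {set T}) : Prop :=
  forall v, v \in Q -> cnbhd e v \subset Q \/ k < #|cnbhd e v :\: Q|.

Lemma pstep_sub (P Q : {set T}) :
  pstep_closed Q -> P \subset Q -> pstep e k P \subset Q.
Proof.
move=> closedQ sPQ; apply/bigcupsP => v /andP [vP few_new].
have [//|many_out] := closedQ v (subsetP sPQ v vP).
have := leq_trans (subset_leq_card (setDS (cnbhd e v) sPQ)) few_new.
by rewrite leqNgt many_out.
Qed.

Lemma pdom_sub (S Q : {set T}) :
  pstep_closed Q -> cnbhdS e S \subset Q -> forall i, pdom e k S i \subset Q.
Proof. by move=> closedQ sNQ; elim=> [|i IHi] //=; apply: pstep_sub. Qed.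

Lemma kpds_closed_setT (S Q : {set T}) :
  kpds e k S -> pstep_closed Q -> cnbhdS e S \subset Q -> Q = setT.
Proof.
move=> /eqP PinfT closedQ sNQ; apply/eqP; rewrite eqEsubset subsetT /=.
by rewrite -PinfT pdom_sub.
Qed.

Lemma kpds_card_gt0 (S : {set T}) : 0 < #|T| -> kpds e k S -> 0 < #|S|.
Proof.
move=> T_gt0 kS; rewrite card_gt0; apply: contraTneq kS => ->; apply/negP => k0.
have closed0 : pstep_closed set0 by move=> v; rewrite inE.
have N0 : cnbhdS e set0 \subset set0 by apply/bigcupsP => v; rewrite inE.
by move: T_gt0; rewrite -cardsT -(kpds_closed_setT k0 closed0 N0) cards0.
Qed.

Lemma gammaPk_eq m :
  (exists2 S, kpds e k S & #|S| = m) -> (forall S, kpds e k S -> m <= #|S|) ->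
  gammaPk e k = m.
Proof.
move=> [S kS <-] minS; apply/eqP; rewrite eqn_leq /gammaPk; apply/andP; split.
  rewrite -minEnat.
  by have := Order.TotalTheory.bigmin_le_cond #|T| (fun A : {set T} => #|A|) kS.
elim/big_ind: _ => [|x y ? ?|S' /minS] //; first exact: max_card.
by rewrite leq_min; apply/andP.
Qed.

End PowerDomination.

Section RookGraph.
Variables (a k : nat).

Local Notation V := ('I_a * 'I_a)%type.
Local Notation G := (@KaKa a).

Lemma mem_cnbhd_KaKa (u v : V) : (u \in cnbhd G v) = (u.1 == v.1) || (u.2 == v.2).
Proof.
case: u v => [x1 x2] [y1 y2]; rewrite inE /KaKa /cart_rel /complete_rel /= xpair_eqE.
by rewrite (eq_sym y1) (eq_sym y2); case: (x1 == y1); case: (x2 == y2).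
Qed.

Definition rows (S : {set V}) : {set 'I_a} := [set s.1 | s in S].
Definition cols (S : {set V}) : {set 'I_a} := [set s.2 | s in S].
Definition lines (R C : {set 'I_a}) : {set V} := [set u | (u.1 \in R) || (u.2 \in C)].

Lemma cnbhdS_KaKa (S : {set V}) : cnbhdS G S = lines (rows S) (cols S).
Proof.
apply/setP => u; rewrite inE; apply/bigcupP/orP => [[s sS]|].
  by rewrite mem_cnbhd_KaKa => /orP [] /eqP ->; [left|right]; rewrite imset_f.
by case=> /imsetP [s sS eq_us]; exists s; rewrite // mem_cnbhd_KaKa eq_us eqxx ?orbT.
Qed.

Lemma card_setC_ord (R : {set 'I_a}) : #|~: R| = a - #|R|.
Proof. by have := cardsC R; rewrite card_ord; lia. Qed.

Lemma card_segment (R : {set 'I_a}) (f : 'I_a -> V) :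
  injective f -> #|[set f x | x in ~: R]| = a - #|R|.
Proof. by move=> /card_imset ->; apply: card_setC_ord. Qed.

Lemma cnbhd_diff_lines_col (R C : {set 'I_a}) (v : V) :
  v.1 \in R -> cnbhd G v :\: lines R C \subset [set (x, v.2) | x in ~: R].
Proof.
move=> vR; apply/subsetP => -[x y]; rewrite in_setD mem_cnbhd_KaKa inE /= negb_or.
case/andP=> /andP [xR _] /orP [/eqP eq_xv|/eqP ->]; first by rewrite eq_xv vR in xR.
by rewrite imset_f // inE.
Qed.

Lemma col_sub_cnbhd_diff_lines (R C : {set 'I_a}) (v : V) :
  v.2 \notin C -> [set (x, v.2) | x in ~: R] \subset cnbhd G v :\: lines R C.
Proof.
move=> vC; apply/subsetP => _ /imsetP [x xR ->].
by rewrite in_setD mem_cnbhd_KaKa inE /= eqxx orbT andbT negb_or -in_setC xR.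
Qed.

Lemma row_sub_cnbhd_diff_lines (R C : {set 'I_a}) (v : V) :
  v.1 \notin R -> [set (v.1, y) | y in ~: C] \subset cnbhd G v :\: lines R C.
Proof.
move=> vR; apply/subsetP => _ /imsetP [y yC ->].
by rewrite in_setD mem_cnbhd_KaKa inE /= eqxx andbT negb_or vR -in_setC yC.
Qed.

Lemma lines_pstep_closed (R C : {set 'I_a}) :
  #|R| + k < a -> #|C| + k < a -> pstep_closed G k (lines R C).
Proof.
move=> R_small C_small v; rewrite inE.
have [vR|vR] := boolP (v.1 \in R); have [vC|vC] := boolP (v.2 \in C) => //= _.
- left; apply/subsetP => u; rewrite mem_cnbhd_KaKa inE.
  by case/orP=> /eqP ->; rewrite ?vR ?vC ?orbT.
- right; apply: leq_trans _ (subset_leq_card (col_sub_cnbhd_diff_lines _ vC)).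
  by rewrite card_segment; [lia|move=> x y []].
- right; apply: leq_trans _ (subset_leq_card (row_sub_cnbhd_diff_lines _ vR)).
  by rewrite card_segment; [lia|move=> x y []].
Qed.

Lemma KaKa_kpds_card (S : {set V}) : kpds G k S -> a <= #|S| + k.
Proof.
move=> kS; rewrite leqNgt; apply/negP => S_small.
have R_small : #|rows S| + k < a.
  by apply: leq_ltn_trans S_small; rewrite leq_add2r leq_imset_card.
have C_small : #|cols S| + k < a.
  by apply: leq_ltn_trans S_small; rewrite leq_add2r leq_imset_card.
have /card_gt0P [x xR] : 0 < #|~: rows S| by rewrite card_setC_ord; lia.
have /card_gt0P [y yC] : 0 < #|~: cols S| by rewrite card_setC_ord; lia.
have := kpds_closed_setT kS (lines_pstep_closed R_small C_small).
rewrite cnbhdS_KaKa subxx => /(_ isT) /setP /(_ (x, y)).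
by rewrite inE /=; move: xR yC; rewrite !inE => /negbTE -> /negbTE ->.
Qed.

Lemma KaKa_kpds_rows (S : {set V}) :
  0 < #|S| -> a <= #|rows S| + k -> kpds G k S.
Proof.
move=> /card_gt0P [s sS] many_rows; apply: (@kpds_pdom _ _ _ _ 1).
  by apply/card_gt0P; exists s.
apply/setP => u; rewrite inE; apply/bigcupP; exists (s.1, u.2); last first.
  by rewrite mem_cnbhd_KaKa eqxx orbT.
have sR : s.1 \in rows S by apply: imset_f.
rewrite cnbhdS_KaKa inE /= sR /=.
apply: leq_trans (subset_leq_card (cnbhd_diff_lines_col (v := (s.1, u.2)) _ sR)) _.
by rewrite card_segment; [lia|move=> x y []].
Qed.

Lemma exists_rows_card m :
  m <= a -> exists2 S : {set V}, #|S| = m & #|rows S| = m.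
Proof.
move=> le_m_a; pose w (i : 'I_m) := widen_ord le_m_a i.
have w_inj : injective w by move=> i j /(congr1 val) /= /val_inj.
exists [set (w i, w i) | i : 'I_m].
  by rewrite card_imset ?card_ord // => i j [/val_inj].
by rewrite /rows -imset_comp (card_imset _ w_inj) card_ord.
Qed.

Lemma gammaPk_KaKa : 0 < a -> gammaPk G k = maxn 1 (a - k).
Proof.
move=> a_gt0; apply: gammaPk_eq => [|S kS].
  have [|S cardS rowsS] := @exists_rows_card (maxn 1 (a - k)); first lia.
  by exists S => //; apply: KaKa_kpds_rows; rewrite ?cardS ?rowsS; lia.
have := KaKa_kpds_card kS.
have := kpds_card_gt0 _ kS; rewrite card_prod card_ord muln_gt0 a_gt0 => /(_ isT).
by move: #|S| => s; lia.
Qed.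

End RookGraph.

Theorem mainTheorem5 (k a : nat) (hk : 0 < k) (ha : 1 <= a) :
  @gammaPk _ (@KaKa a) k = (if k + 2 <= a then a - k else 1).
Proof. by rewrite gammaPk_KaKa //; case: ifP; lia. Qed.
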